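(* Suppose every IDR of the system $\mathcal{I}(E,\mathcal{F}(E))$ is of Restricted Case II form, and let $E'\subseteq E$. Then for any two entities $e_i,e_j\in E$, $$PS(e_i\mid E')\cup PS(e_j\mid E') = PS(\{e_i,e_j\}\mid E').$$
   Context: A system $\mathcal{I}(E,\mathcal{F}(E))$ consists of a finite set $E$ of entities, $n=|E|$, and a set $\mathcal{F}(E)$ of interdependency relations (IDRs). Each entity $e$ has at most one IDR, of the form $e\leftarrow \sum_{i=1}^{m}\prod_{x\in s_i}x$ (a disjunction of conjunctions), where each minterm $s_i$ is a nonempty subset of $E$; it means $e$ is operational only if for at least one minterm all entities of that minterm are operational. Entities without an IDR can only fail initially. Failure dynamics: given an initially failing set $E'\subseteq E$ and a set $H\subseteq E$ of hardened entities (hardened entities never fail), put $F_0=E'\setminus H$ and $F_{t+1}=F_t\cup\{e\in E\setminus H: e \text{ has an IDR and every minterm of it contains an element of } F_t\}$; the final failed set is $F(E',H):=F_{n-1}$. $\mathrm{KillSet}(E'):=F(E',\emptyset)$. Protection set: for $H\subseteq E$, $PS(H\mid E'):=\mathrm{KillSet}(E')\setminus F(E',H)$ (the entities prevented from failing by hardening $H$); for a single entity, $PS(e\mid E'):=PS(\{e\}\mid E')$. Restricted Case II: every IDR has the form $e_i\leftarrow \sum_{q=1}^{p} e_q$ with $e_q\in E$ (a disjunction of minterms of size one). *)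

From mathcomp Require Import all_boot.
Set Implicit Arguments. Unset Strict Implicit. Unset Printing Implicit Defensive.

(* An interdependency system over a finite entity type T (E = [set: T], n = #|T|).
   idr e = None       : e has no IDR;
   idr e = Some ms    : e <- sum_{s in ms} prod_{x in s} x  (ms = list of minterms). *)
Definition system (T : finType) := T -> option (seq {set T}).

Definition well_formed (T : finType) (I : system T) : Prop :=
  forall e ms, I e = Some ms -> forall s, s \in ms -> s != set0.

Definition restricted_case_II (T : finType) (I : system T) : Prop :=
  forall e ms, I e = Some ms -> forall s, s \in ms -> #|s| = 1.

Definition fail_step (T : finType) (I : system T) (H F : {set T}) : {set T} :=
  F :|: [set e | (e \notin H) &&
          (if I e is Some ms then all (fun s : {set T} => [exists x in s, x \in F]) ms
           else false)].

Definition fail_iter (T : finType) (I : system T) (E' H : {set T}) (t : nat) : {set T} :=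
  iter t (fail_step I H) (E' :\: H).

Definition final_failed (T : finType) (I : system T) (E' H : {set T}) : {set T} :=
  fail_iter I E' H (#|T|).-1.

Definition KillSet (T : finType) (I : system T) (E' : {set T}) : {set T} :=
  final_failed I E' set0.

Definition PS (T : finType) (I : system T) (H E' : {set T}) : {set T} :=
  KillSet I E' :\: final_failed I E' H.

From mathcomp Require Import all_boot.
Set Implicit Arguments. Unset Strict Implicit. Unset Printing Implicit Defensive.

(* After the first step, the failed set is F_{t+1} = {e not hardened | e in E' or
   the IDR of e is falsified by F_t}. When all minterms are singletons, "every
   minterm meets F_1 and every minterm meets F_2" is the same as "every minterm
   meets F_1 :&: F_2", so this update sends (F_1 :&: F_2, H_1 :|: H_2) to the
   intersection of the updates of (F_1, H_1) and (F_2, H_2). By induction the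
   failed set under H_1 :|: H_2 is the intersection of the failed sets under H_1
   and H_2, and taking complements in the kill set gives the union of the
   protection sets. *)

Section FailureDynamics.

Variables (T : finType) (I : system T).

Definition idr_falsified (F : {set T}) (e : T) : bool :=
  if I e is Some ms then all (fun s : {set T} => [exists x in s, x \in F]) ms
  else false.

Definition fail_next (E' H F : {set T}) : {set T} :=
  [set e | (e \notin H) && ((e \in E') || idr_falsified F e)].

Lemma fail_stepE (H F : {set T}) :
  fail_step I H F = F :|: [set e | (e \notin H) && idr_falsified F e].
Proof. by []. Qed.

Lemma idr_falsified_subset (F G : {set T}) (e : T) :
  F \subset G -> idr_falsified F e -> idr_falsified G e.
Proof.
move=> sFG; rewrite /idr_falsified; case: (I e) => // ms.
apply: sub_all => s /existsP [x /andP [xs xF]].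
by apply/existsP; exists x; rewrite xs (subsetP sFG).
Qed.

Lemma fail_next_subset (E' H F G : {set T}) :
  F \subset G -> fail_next E' H F \subset fail_next E' H G.
Proof.
move=> sFG; apply/subsetP => e; rewrite !inE => /andP [-> /orP [->//|fe]].
by rewrite (idr_falsified_subset sFG fe) orbT.
Qed.

Lemma idr_falsifiedI (F G : {set T}) (e : T) :
  restricted_case_II I ->
  idr_falsified (F :&: G) e = idr_falsified F e && idr_falsified G e.
Proof.
move=> caseII; rewrite /idr_falsified; case Ie: (I e) => [ms|] //.
rewrite -all_predI; apply: eq_in_all => s /(caseII _ _ Ie) /eqP /cards1P [y ->].
have exists_set1 (P : pred T) : [exists x in [set y], P x] = P y.
  by apply/existsP/idP => [[x /andP [/set1P ->]]|Py] //; exists y; rewrite set11.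
by rewrite /= !exists_set1 inE.
Qed.

Lemma fail_nextUI (E' H1 H2 F1 F2 : {set T}) :
  restricted_case_II I ->
  fail_next E' (H1 :|: H2) (F1 :&: F2) = fail_next E' H1 F1 :&: fail_next E' H2 F2.
Proof.
move=> caseII; apply/setP => e; rewrite !inE idr_falsifiedI //.
by rewrite negb_or orb_andr -!andbA; do !bool_congr.
Qed.

Lemma fail_iter_subsetS (E' H : {set T}) (t : nat) :
  fail_iter I E' H t \subset fail_iter I E' H t.+1.
Proof. by rewrite [fail_iter _ _ _ t.+1]/= fail_stepE subsetUl. Qed.

Lemma fail_iter_subset_next (E' H : {set T}) (t : nat) :
  fail_iter I E' H t \subset fail_next E' H (fail_iter I E' H t).
Proof.
elim: t => [|t IHt].
  by apply/subsetP => e; rewrite !inE => /andP [-> ->].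
apply: subset_trans (fail_next_subset _ _ (fail_iter_subsetS _ _ t)).
rewrite [fail_iter _ _ _ t.+1]/= fail_stepE subUset IHt /=.
by apply/subsetP => e; rewrite !inE => /andP [-> ->]; rewrite orbT.
Qed.

Lemma fail_iterS (E' H : {set T}) (t : nat) :
  fail_iter I E' H t.+1 = fail_next E' H (fail_iter I E' H t).
Proof.
have init_sub : E' :\: H \subset fail_iter I E' H t.
  by elim: t => [|t IHt] //; apply: subset_trans IHt (fail_iter_subsetS _ _ t).
apply/eqP; rewrite eqEsubset [fail_iter _ _ _ t.+1]/= fail_stepE.
rewrite subUset fail_iter_subset_next /=; apply/andP; split.
  by apply/subsetP => e; rewrite !inE => /andP [-> ->]; rewrite orbT.
apply/subsetP => e; rewrite !inE => /andP [eH /orP [eE'|->]]; last by rewrite eH orbT.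
by rewrite (subsetP init_sub) // inE eH.
Qed.

Lemma fail_iterU (E' H1 H2 : {set T}) (t : nat) :
  restricted_case_II I ->
  fail_iter I E' (H1 :|: H2) t = fail_iter I E' H1 t :&: fail_iter I E' H2 t.
Proof.
move=> caseII; elim: t => [|t IHt]; first exact: setDUr.
by rewrite !fail_iterS IHt fail_nextUI.
Qed.

End FailureDynamics.

Theorem theorem4 (T : finType) (I : system T) (E' : {set T}) (ei ej : T) :
  well_formed I -> restricted_case_II I ->
  PS I [set ei] E' :|: PS I [set ej] E' = PS I [set ei; ej] E'.
Proof.
move=> _ caseII; rewrite /PS /final_failed.
by rewrite fail_iterU // setDIr.
Qed.
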